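(* Let $d\ge3$, $h\ge1$, and for $1\le n\le h$ let $\mathbf{y}_n := \sum_{i\in S_n}\mathbf{x}_i$, where $S_n$ is the set of vertices at distance $n$ from the root. Then the order of $\bar{\mathbf{y}}_n$ in $G(d,h)$ is $(d-1)^{h+1-n}$.
   Context: Let $\mathcal{T}(d,h)$ be the rooted tree in which the root $0$ has $d$ children, every vertex at distance $1,\dots,h-1$ from the root has $d-1$ children, and the vertices at distance $h$ are leaves. Let $V$ be its vertex set, $A$ its adjacency matrix, $\Delta := dI-A$, and $\Lambda\subset\mathbb{Z}^V$ the lattice spanned by the rows of $\Delta$. Then $G(d,h):=\mathbb{Z}^V/\Lambda$; $\{\mathbf{x}_i:i\in V\}$ is the standard basis of $\mathbb{Z}^V$ and $\bar{\mathbf{v}}$ denotes the image of $\mathbf{v}\in\mathbb{Z}^V$ in $G(d,h)$. *)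

From mathcomp Require Import all_boot all_order all_algebra.
Unset Printing Implicit Defensive.
Import GRing.Theory Num.Theory.
Local Open Scope ring_scope.

(* Vertices of T(d,h) are encoded as paths from the root: the root is [::],
   the children of the root are [:: i] for i < d, and the children of a
   non-root vertex s are rcons s i for i < d-1.  A vertex at distance n from
   the root is a sequence of length n. *)
Definition children (d : nat) (s : seq nat) : seq (seq nat) :=
  [seq rcons s i | i <- iota 0 (if s is [::] then d else d.-1)].

Fixpoint level (d n : nat) : seq (seq nat) :=
  if n is n'.+1 then flatten [seq children d s | s <- level d n'] else [:: [::]].

Definition tree_verts (d h : nat) : seq (seq nat) :=
  flatten [seq level d n | n <- iota 0 h.+1].

Definition TV (d h : nat) : finType := seq_sub (tree_verts d h).

Definition is_child (s t : seq nat) : bool :=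
  (size t == (size s).+1)%N && (take (size s) t == s).

Definition tree_adj (s t : seq nat) : bool := is_child s t || is_child t s.

Definition Delta {d h : nat} (i j : TV d h) : int :=
  (d%:Z * (nat_of_bool (i == j))%:Z) - (nat_of_bool (tree_adj (val i) (val j)))%:Z.

Definition in_lattice (d h : nat) (v : TV d h -> int) : Prop :=
  exists c : TV d h -> int, forall j, v j = \sum_(i : TV d h) c i * Delta i j.

Definition ylevel (d h n : nat) : TV d h -> int :=
  fun j => (nat_of_bool (size (val j) == n))%:Z.

(* The order of vbar in G(d,h) = Z^V / Lambda is m (m > 0, minimal with m v in Lambda). *)
Definition order_in_G (d h : nat) (v : TV d h -> int) (m : nat) : Prop :=
  [/\ (0 < m)%N,
      @in_lattice d h (fun j => m%:Z * v j)
    & forall k : nat, (0 < k)%N -> @in_lattice d h (fun j => k%:Z * v j) -> (m <= k)%N].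

From mathcomp Require Import all_boot all_order all_algebra.
From mathcomp Require Import zify ring.
Import GRing.Theory Num.Theory.

(* Write e = d - 1.  On radial vectors (functions of the depth) Delta acts by a
   three-term recurrence.  The radial vector a(m) = 1 + e + ... + e^(h-m) is
   mapped by Delta to d e^h times the root indicator, and its truncation
   a(max(m, n)) to e^(h+1-n) y_n; hence e^(h+1-n) y_n lies in Lambda.
   Conversely, Delta is symmetric, so pairing k y_n = c Delta with a gives
   k a(n) |S_n| = c(root) d e^h.  Since |S_n| = d e^(n-1) and a(n) = 1 mod e,
   e^(h+1-n) divides k. *)

Section SeqSubSums.
Local Open Scope ring_scope.

Lemma big_seq_sub_filter {T : choiceType} {s : seq T} {R : nmodType}
    (P : pred T) (F : T -> R) (L : seq T) :
  uniq L -> (forall x, (x \in s) && P x = (x \in L)) ->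
  \sum_(i : seq_sub s | P (val i)) F (val i) = \sum_(x <- L) F x.
Proof.
move=> uniqL memL; rewrite -(big_map val P F) -big_filter.
apply: perm_big; apply: uniq_perm => //.
  by rewrite filter_uniq // map_inj_uniq ?index_enum_uniq //; exact: val_inj.
move=> x; rewrite mem_filter -memL andbC; congr (_ && _).
apply/mapP/idP => [[i _ ->]|xs]; first exact: valP.
by exists (SeqSub xs); rewrite ?mem_index_enum.
Qed.

End SeqSubSums.

Definition valid_path (d : nat) (s : seq nat) : bool :=
  if s is a :: t then (a < d) && all (fun x => x < d.-1) t else true.

Definition branching (d m : nat) : nat := if m is 0 then d else d.-1.

Lemma valid_path_rcons d p k :
  valid_path d (rcons p k) = valid_path d p && (k < branching d (size p)).
Proof.
case: p => [|a t] /=; first by rewrite andbT.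
by rewrite all_rcons; case: (a < d); case: (k < d.-1); case: (all _ t).
Qed.

Lemma is_child_rcons p q k : is_child p (rcons q k) = (q == p).
Proof.
rewrite /is_child size_rcons eqSS; case: eqP => [<-|ne] /=.
  by rewrite -cats1 take_size_cat.
by apply/esym/eqP => qp; apply: ne; rewrite qp.
Qed.

Lemma mem_level d n x : (x \in level d n) = (size x == n) && valid_path d x.
Proof.
elim: n x => [|n IH] x; first by case: x.
apply/flattenP/idP => [[_ /mapP[p pl ->] /mapP[i]]|].
  rewrite mem_iota => /andP[_ ilt] ->.
  move: pl; rewrite IH size_rcons eqSS valid_path_rcons => /andP[-> ->] /=.
  by case: p ilt.
case/lastP: x => [//|q k]; rewrite size_rcons eqSS valid_path_rcons.
move=> /andP[sz /andP[vq kq]]; exists (children d q).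
  by apply/mapP; exists q; rewrite ?IH ?sz.
by apply/mapP; exists k; rewrite // mem_iota; case: q kq {sz vq}.
Qed.

Lemma mem_tree_verts d h x :
  (x \in tree_verts d h) = (size x <= h) && valid_path d x.
Proof.
apply/flattenP/idP => [[L /mapP[m]]|/andP[sz vx]].
  rewrite mem_iota => /andP[_ mh] ->.
  by rewrite mem_level => /andP[/eqP -> ->]; rewrite andbT -ltnS.
exists (level d (size x)); last by rewrite mem_level eqxx.
by apply/mapP; exists (size x); rewrite // mem_iota.
Qed.

Lemma Delta_sym d h (i j : TV d h) : Delta i j = Delta j i.
Proof. by rewrite /Delta eq_sym /tree_adj orbC. Qed.

Definition radial_Delta (d h : nat) (g : nat -> int) (m : nat) : int :=
  (d%:Z * g m - (if m is m'.+1 then g m' else 0)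
   - (if (m < h)%N then (branching d m)%:Z * g m.+1 else 0))%R.

Lemma radial_Delta_local {d h : nat} (g g' : nat -> int) m :
  g m.-1 = g' m.-1 -> g m = g' m -> g m.+1 = g' m.+1 ->
  radial_Delta d h g m = radial_Delta d h g' m.
Proof. by case: m => [|m] /= e1 e2 e3; rewrite /radial_Delta e2 e3 ?e1. Qed.

Section RadialSums.
Local Open Scope ring_scope.
Context {d h : nat}.

Lemma size_TV_le (j : TV d h) : (size (val j) <= h)%N.
Proof. by have := valP j; rewrite mem_tree_verts => /andP[]. Qed.

Lemma sum_parents (f : nat -> int) y : y \in tree_verts d h ->
  \sum_(i : TV d h | is_child (val i) y) f (size (val i)) =
  if size y is s.+1 then f s else 0.
Proof.
case/lastP: y => [|q k] yin.
  rewrite (big_seq_sub_filter (is_child^~ [::]) (f \o size) [::]) ?big_nil //.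
  by move=> x; rewrite andbF.
rewrite (big_seq_sub_filter (is_child^~ (rcons q k)) (f \o size) [:: q]) //.
  by rewrite big_seq1 /= size_rcons.
move=> x; rewrite is_child_rcons mem_seq1 eq_sym.
case: eqP => [->|_]; rewrite ?andbF ?andbT //.
move: yin; rewrite !mem_tree_verts size_rcons valid_path_rcons.
by case/andP=> /ltnW -> /andP[].
Qed.

Lemma sum_children (f : nat -> int) p : p \in tree_verts d h ->
  \sum_(i : TV d h | is_child p (val i)) f (size (val i)) =
  if (size p < h)%N then (branching d (size p))%:Z * f (size p).+1 else 0.
Proof.
move=> pin; case: ltnP => ph; last first.
  rewrite (big_seq_sub_filter (is_child p) (f \o size) [::]) ?big_nil // => x.
  rewrite mem_tree_verts in_nil; apply/negbTE.
  apply/negP => /andP[/andP[sz _] /andP[/eqP sx _]].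
  by move: sz; rewrite sx ltnNge ph.
set L := [seq rcons p k | k <- iota 0 (branching d (size p))].
rewrite (big_seq_sub_filter (is_child p) (f \o size) L) /=.
- rewrite big_map (eq_bigr (fun=> f (size p).+1)) => [|k _]; last first.
    by rewrite size_rcons.
  by rewrite big_const_seq count_predT size_iota iter_addr_0 -mulr_natl natz.
- by rewrite map_inj_uniq ?iota_uniq //; exact: rcons_injr.
case/lastP=> [|q k].
  by rewrite andbF; apply/esym/mapP => -[k _] /(congr1 size); rewrite size_rcons.
rewrite is_child_rcons; case: (eqVneq q p) => [->|neq]; last first.
  rewrite andbF; apply/esym/mapP => -[k' _] /eqP.
  by rewrite eqseq_rcons (negbTE neq).
rewrite andbT mem_map ?mem_iota; last exact: rcons_injr.
by move: pin; rewrite !mem_tree_verts size_rcons valid_path_rcons ph => /andP[_ ->].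
Qed.

Lemma sum_radial_Delta (g : nat -> int) (j : TV d h) :
  \sum_(i : TV d h) g (size (val i)) * Delta i j = radial_Delta d h g (size (val j)).
Proof.
have mul_nat_of_bool (x : int) (b : bool) :
    x * (nat_of_bool b)%:Z = (if b then x else 0).
  by case: b; rewrite ?mulr1 ?mulr0.
rewrite /Delta; under eq_bigr => i _ do rewrite mulrBr mulrCA !mul_nat_of_bool.
rewrite sumrB (bigD1 j) //= eqxx big1 => [|i /negbTE ->]; last by rewrite mulr0.
rewrite addr0 /radial_Delta -addrA -opprD.
rewrite -(sum_parents g _ (valP j)) -(sum_children g _ (valP j)).
congr (_ - _).
rewrite [in RHS](big_mkcond (fun i => is_child _ _)) [X in _ + X]big_mkcond.
rewrite -big_split /=.
apply: eq_bigr => i _; rewrite /tree_adj.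
case c1: (is_child (val i) (val j)); case c2: (is_child (val j) (val i));
  rewrite /= ?addr0 ?add0r //.
by move: c1 c2; rewrite /is_child => /andP[/eqP-> _] /andP[/eqP]; lia.
Qed.

Lemma sum_ylevel0 : \sum_(j : TV d h) ylevel d h 0 j = 1.
Proof.
rewrite (eq_bigr (fun j : TV d h => if size (val j) == 0%N then 1 else 0)).
  rewrite -big_mkcond.
  rewrite (big_seq_sub_filter (fun x => size x == 0%N) (fun=> 1) [:: [::]]) //.
    by rewrite big_seq1.
  by case=> [|a t]; rewrite ?mem_tree_verts ?andbF.
by move=> j _; rewrite /ylevel; case: (size _ == 0%N).
Qed.

Lemma sum_ylevelS m : (m < h)%N ->
  \sum_(j : TV d h) ylevel d h m.+1 j =
  (branching d m)%:Z * \sum_(j : TV d h) ylevel d h m j.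
Proof.
move=> mh; rewrite /ylevel.
transitivity (\sum_(j : TV d h) \sum_(i : TV d h | is_child (val i) (val j))
                 (nat_of_bool (size (val j) == m.+1))%:Z).
  apply: eq_bigr => j _.
  by rewrite (sum_parents (fun=> _) _ (valP j)); case: (size _).
rewrite (exchange_big_dep xpredT) //= mulr_sumr; apply: eq_bigr => i _.
rewrite (sum_children (fun k => (nat_of_bool (k == m.+1))%:Z) _ (valP i)) eqSS.
case: (eqVneq (size (val i)) m) => [->|_]; first by rewrite mh mulr1.
by rewrite mulr0; case: ifP; rewrite ?mulr0.
Qed.

Lemma sum_ylevel m : (m < h)%N ->
  \sum_(j : TV d h) ylevel d h m.+1 j = (d * d.-1 ^ m)%N%:Z.
Proof.
elim: m => [|m IH] mh; first by rewrite sum_ylevelS // sum_ylevel0 muln1 mulr1.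
by rewrite sum_ylevelS // IH 1?ltnW // -PoszM mulnCA -expnS.
Qed.

Lemma dvdz_lattice_dot {v w : TV d h -> int} {M : int} :
  (forall i, (M %| \sum_j Delta i j * w j)%Z) -> in_lattice d h v ->
  (M %| \sum_j v j * w j)%Z.
Proof.
move=> Mdvd [c vE]; under eq_bigr => j _ do rewrite vE mulr_suml.
rewrite exchange_big /=; apply: rpred_sum => i _.
under eq_bigr => j _ do rewrite -mulrA.
by rewrite -mulr_sumr dvdz_mull.
Qed.

End RadialSums.

Fixpoint repunit (e k : nat) : nat := if k is k'.+1 then 1 + e * repunit e k' else 1.

Lemma repunitS e k : repunit e k.+1 = repunit e k + e ^ k.+1.
Proof.
elim: k => [|k IH]; first by rewrite /= muln1 addnC.
have -> : repunit e k.+2 = 1 + e * repunit e k.+1 by [].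
by rewrite {1}IH mulnDr addnA -expnS.
Qed.

Lemma coprime_repunit e k : coprime e (repunit e k).
Proof.
case: k => [|k] /=; first exact: coprimen1.
by rewrite -coprime_modr addnC mulnC modnMDl coprime_modr coprimen1.
Qed.

Definition root_potential (e h m : nat) : int := (repunit e (h - m))%:Z.

Definition level_potential (e h n m : nat) : int := root_potential e h (maxn m n).

Section Potentials.
Local Open Scope ring_scope.
Variables e h : nat.

Lemma radial_Delta_const (C : int) m :
  (m < h)%N -> radial_Delta e.+1 h (fun=> C) m = 0.
Proof.
move=> mh; rewrite /radial_Delta mh; case: m {mh} => [|m] /=.
  by rewrite subr0 subrr.
by rewrite -[e.+1]addn1 PoszD; ring.
Qed.

Lemma radial_Delta_root_potential m : (m <= h)%N ->
  radial_Delta e.+1 h (root_potential e h) m =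
  if m == 0%N then (e.+1 * e ^ h)%N%:Z else 0.
Proof.
rewrite /radial_Delta /root_potential; case: m => [|m] mh /=.
  case: h => [|h'] /=; first by rewrite !subr0 muln1 mulr1.
  by rewrite -/(repunit e h'.+1) subSS subn0 repunitS PoszD !PoszM; ring.
case: (ltngtP m.+1 h) => [mh'|hm|<-].
- have -> : (h - m = (h - m.+2).+2)%N by lia.
  have -> : (h - m.+1 = (h - m.+2).+1)%N by lia.
  set K := (h - m.+2)%N.
  rewrite [in X in _ - X - _]repunitS repunitS [(e ^ K.+2)%N]expnS -[e.+1]addn1.
  by rewrite !PoszD !PoszM; ring.
- by move: mh; rewrite leqNgt hm.
- by rewrite subnn subSnn /= muln1 subr0 -[e.+1]addn1 PoszD; ring.
Qed.

Lemma radial_Delta_level_potential n m : (0 < n <= h)%N -> (m <= h)%N ->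
  radial_Delta e.+1 h (level_potential e h n) m =
  if m == n then (e ^ (h + 1 - n))%N%:Z else 0.
Proof.
move=> /andP[n0 nh] mh; rewrite /level_potential.
case: (ltngtP m n) => [mn|nm|->].
- rewrite (radial_Delta_local _ (fun=> root_potential e h n)) ?radial_Delta_const //;
    [lia | congr root_potential; lia ..].
- rewrite (radial_Delta_local _ (root_potential e h));
    rewrite ?radial_Delta_root_potential //;
    [by case: m nm {mh} | congr root_potential; lia ..].
have jumpE : radial_Delta e.+1 h (fun k => root_potential e h (maxn k n)) n =
    radial_Delta e.+1 h (root_potential e h) n +
    (root_potential e h n.-1 - root_potential e h n).
  case: n n0 nh => [//|n'] _ nh.
  rewrite /radial_Delta maxnn (maxn_idPr (leqnSn n')).
  by rewrite (maxn_idPl (leqnSn n'.+1)) /=; ring.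
rewrite jumpE radial_Delta_root_potential // (gtn_eqF n0) add0r /root_potential.
have -> : (h - n.-1 = (h - n).+1)%N by lia.
have -> : (h + 1 - n = (h - n).+1)%N by lia.
by rewrite repunitS addnC PoszD addrK.
Qed.

End Potentials.

Section LevelOrder.
Local Open Scope ring_scope.
Context {e h n : nat}.
Hypothesis n_range : (0 < n <= h)%N.

Lemma ylevel_in_lattice :
  in_lattice e.+1 h (fun j => (e ^ (h + 1 - n))%N%:Z * ylevel e.+1 h n j).
Proof.
exists (fun i => level_potential e h n (size (val i))) => j.
rewrite sum_radial_Delta radial_Delta_level_potential ?size_TV_le // /ylevel.
by case: eqP; rewrite ?mulr1 ?mulr0.
Qed.

Lemma ylevel_order_dvd {k : nat} : (0 < e)%N ->
  in_lattice e.+1 h (fun j => k%:Z * ylevel e.+1 h n j) -> (e ^ (h + 1 - n) %| k)%N.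
Proof.
move=> e0 lat; set a := fun j : TV e.+1 h => root_potential e h (size (val j)).
have Delta_dot i : ((e.+1 * e ^ h)%N%:Z %| \sum_j Delta i j * a j)%Z.
  under eq_bigr => j _ do rewrite Delta_sym mulrC.
  rewrite sum_radial_Delta radial_Delta_root_potential ?size_TV_le //.
  by case: eqP => _; rewrite ?dvdzz ?dvdz0.
have := dvdz_lattice_dot Delta_dot lat.
case: n n_range => [//|n'] /andP[_ nh].
set an := (k * repunit e (h - n'.+1))%N.
rewrite (eq_bigr (fun j => an%:Z * ylevel e.+1 h n'.+1 j)); last first.
  move=> j _; rewrite /a /ylevel /root_potential PoszM.
  by case: (size (val j) =P n'.+1) => [->|_]; rewrite ?mulr1 ?mulr0 ?mul0r.
rewrite -mulr_sumr sum_ylevel // -PoszM dvdzE /=.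
have -> : (h + 1 - n'.+1 = h - n')%N by lia.
have -> : (e.+1 * e ^ h = e ^ (h - n') * (e.+1 * e ^ n'))%N.
  by rewrite mulnCA -expnD subnK // ltnW.
rewrite dvdn_pmul2r ?muln_gt0 ?expn_gt0 ?e0 // Gauss_dvdl //.
exact/coprimeXl/coprime_repunit.
Qed.

End LevelOrder.

Theorem proposition7p7 (d h n : nat) :
  (3 <= d)%N -> (1 <= h)%N -> (1 <= n <= h)%N ->
  order_in_G d h (ylevel d h n) ((d - 1) ^ (h + 1 - n))%N.
Proof.
move=> d3 _ nh.
have [e e0 ->] : exists2 e, (0 < e)%N & d = e.+1 by exists d.-1; lia.
rewrite subSS subn0; split.
- by rewrite expn_gt0 e0.
- exact: ylevel_in_lattice nh.
- by move=> k k0 /(ylevel_order_dvd nh e0)/dvdn_leq; apply.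
Qed.
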